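(* Let $X$ be a compact metric space, $T\colon X\to X$ a homeomorphism and $\mu$ an ergodic $T$-invariant Borel probability measure. Let $H\colon X\to\mathbb{GL}^+(2,\mathbb{R})$ be continuous of the form $H(x)=\begin{pmatrix}\lambda(x)&0\\ \sigma(x)&\eta(x)\end{pmatrix}$ with $\eta(x)>0$, such that the cocycle $H$ over $T$ has dominated splitting with dominating direction $\mathrm{span}(\mathbf{e}_2)$. For $\theta\in\mathbb{R}$ let $\lambda^+(\theta)=\lambda^+(H_\theta)$ where $H_\theta(x)=H(x)R_\theta$. If $\sigma(x)=0$ for $\mu$-a.e. $x\in X$, then $\lambda^+(\theta)$ has a local maximum at $\theta=0$.
   Context: $R_\theta$: rotation by angle $\theta$; $\lambda^+(B)=\lim_{n\to\infty}\frac1n\log\|B(T^{n-1}x)\cdots B(x)\|$ for $\mu$-a.e. $x$. Dominated splitting of a cocycle $B$ over $T$: continuous invariant decomposition $\mathbb{R}^2=E(x)\oplus F(x)$ into lines and $l\ge1$ with $\|B^l(x)|_{E(x)}\|\cdot\|B^{-l}(T^lx)|_{F(T^lx)}\|<\tfrac12$ for all $x$, where $B^n(x)=B(T^{n-1}x)\cdots B(x)$ and $B^{-n}(x)=B(T^{-n}x)^{-1}\cdots B(T^{-1}x)^{-1}$; $F$ is the dominating direction. *)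

From HB Require Import structures.
From mathcomp Require Import all_boot all_order all_algebra.
From mathcomp Require Import all_classical all_reals all_analysis.
Set Implicit Arguments. Unset Strict Implicit. Unset Printing Implicit Defensive.
Import Order.TTheory GRing.Theory Num.Theory.
Import numFieldNormedType.Exports.
Local Open Scope classical_set_scope.
Local Open Scope ring_scope.

Section Defs.
Context {R : realType}.

Definition mat2 (a b c d : R) : 'M[R]_2 :=
  \matrix_(i < 2, j < 2)
    if i == ord0 then (if j == ord0 then a else b) else (if j == ord0 then c else d).

Definition rotation (theta : R) : 'M[R]_2 :=
  mat2 (cos theta) (- sin theta) (sin theta) (cos theta).

Definition e2line : 'M[R]_2 := mat2 0 0 0 1.

Definition vnorm (v : 'cV[R]_2) : R := Num.sqrt (\sum_(i < 2) v i ord0 ^+ 2).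

Fixpoint cocycle {X : Type} (T : X -> X) (B : X -> 'M[R]_2) (n : nat) (x : X)
  : 'M[R]_2 :=
  match n with
  | 0 => 1%:M
  | n'.+1 => B (iter n' T x) *m cocycle T B n' x
  end.

Fixpoint cocycle_inv {X : Type} (Tinv : X -> X) (B : X -> 'M[R]_2) (n : nat)
  (x : X) : 'M[R]_2 :=
  match n with
  | 0 => 1%:M
  | n'.+1 => invmx (B (iter n Tinv x)) *m cocycle_inv Tinv B n' x
  end.

(** A line in R^2, represented by the orthogonal projection matrix onto it;
    the line itself is [set v | P *m v = v]. *)
Definition is_line (P : 'M[R]_2) : Prop :=
  P^T = P /\ P *m P = P /\ \rank P = 1%N.

(** Lines are represented by their orthogonal projections, so continuity of
    the line fields is continuity of the projection-valued maps. *)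
Definition dominated_splitting {X : topologicalType} (T Tinv : X -> X)
  (B : X -> 'M[R]_2) (E F : X -> 'M[R]_2) : Prop :=
  [/\ (forall x, is_line (E x) /\ is_line (F x)),
      continuous E /\ continuous F,
      (forall x (v : 'cV[R]_2),
          (E (T x) *m v = v <-> exists2 u, E x *m u = u & v = B x *m u)
       /\ (F (T x) *m v = v <-> exists2 u, F x *m u = u & v = B x *m u)),
      (forall x (v : 'cV[R]_2), E x *m v = v -> F x *m v = v -> v = 0) &
      exists2 l : nat, (0 < l)%N &
        forall x (u w : 'cV[R]_2),
          E x *m u = u -> u != 0 ->
          F (iter l T x) *m w = w -> w != 0 ->
          (vnorm (cocycle T B l x *m u) / vnorm u) *
          (vnorm (cocycle_inv Tinv B l (iter l T x) *m w) / vnorm w) < 2^-1 ].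

End Defs.

From HB Require Import structures.
From mathcomp Require Import all_boot all_order all_algebra.
From mathcomp Require Import all_classical all_reals all_analysis.
From mathcomp Require Import ring lra.
Set Implicit Arguments. Unset Strict Implicit. Unset Printing Implicit Defensive.

(* Along an orbit on which [sig] vanishes, [H] is diagonal, and domination with
   dominating direction [e2] says that the products of the ratios [lam / eta] over
   windows of [l] steps are below [1 / 2]. Weighting these products geometrically
   yields an adapted weight [w], bounded between [1] and a constant [k], for which the
   ratio contracts at every step. For small [theta] the cone
   [w |p| <= k q, p sin theta <= 0] is invariant under [H R_theta] along the orbit,
   and inside it the second coordinate grows by at most [eta] per step. Hence
   [|H_theta^n x| <= 2 k prod eta <= 2 k |H^n x|], and comparing the exponents at a
   point typical for both angles gives [lambda^+(theta) <= lambda^+(0)]. Such points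
   exist because [sig (T^n x) = 0] for all [n] holds almost everywhere, by invariance. *)
Import Order.TTheory GRing.Theory Num.Theory.
Import numFieldNormedType.Exports.
Local Open Scope classical_set_scope.
Local Open Scope ring_scope.

Section TwoByTwo.
Context {R : realType}.

Lemma sum_ord2 (F : 'I_2 -> R) : \sum_(i < 2) F i = F 0 + F 1.
Proof. by rewrite big_ord_recl big_ord1; congr (_ + F _); exact: val_inj. Qed.

Definition cv2 (a b : R) : 'cV[R]_2 :=
  \matrix_(i < 2, j < 1) if i == ord0 then a else b.

Lemma cv2_0 (a b : R) : cv2 a b ord0 ord0 = a.
Proof. by rewrite mxE. Qed.

Lemma cv2_1 (a b : R) : cv2 a b 1 ord0 = b.
Proof. by rewrite mxE. Qed.

Lemma cv2_eta (v : 'cV[R]_2) : v = cv2 (v ord0 ord0) (v 1 ord0).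
Proof.
apply/matrixP => i j; rewrite mxE (ord1 j).
by case: i => [[|[|//]] Hi]; congr (v _ _); apply: val_inj.
Qed.

Lemma mat2E (a b c d : R) (i j : 'I_2) : mat2 a b c d i j =
  if i == ord0 then (if j == ord0 then a else b) else (if j == ord0 then c else d).
Proof. by rewrite mxE. Qed.

Lemma mul_mat2_cv2 (a b c d x y : R) :
  mat2 a b c d *m cv2 x y = cv2 (a * x + b * y) (c * x + d * y).
Proof. by apply/matrixP => i j; rewrite !mxE sum_ord2 !mxE /=; case: ifP. Qed.

Lemma mul_mat2 (a b c d a' b' c' d' : R) :
  mat2 a b c d *m mat2 a' b' c' d' =
  mat2 (a * a' + b * c') (a * b' + b * d') (c * a' + d * c') (c * b' + d * d').
Proof. by apply/matrixP => i j; rewrite !mxE sum_ord2 !mxE /=; case: ifP; case: ifP. Qed.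

Lemma det_mat2 (a b c d : R) : \det (mat2 a b c d) = a * d - b * c.
Proof.
rewrite (expand_det_row _ 0) sum_ord2 /cofactor !det_mx11 !mxE /=.
by rewrite !add0n expr0 modn_small // expr1 mul1r mulN1r mulrN.
Qed.

Lemma rotation0 : rotation (0 : R) = 1%:M.
Proof.
rewrite /rotation cos0 sin0 oppr0; apply/matrixP => i j; rewrite !mxE.
by case: i => [[|[|//]] Hi]; case: j => [[|[|//]] Hj].
Qed.

Lemma det_rotation (th : R) : \det (rotation th) = 1.
Proof. by rewrite det_mat2 mulNr opprK -!expr2 cos2Dsin2. Qed.

Lemma mat2_continuous_entries (X : topologicalType) (a b c d : X -> R) :
  continuous (fun x => mat2 (a x) (b x) (c x) (d x)) ->
  [/\ continuous a, continuous b, continuous c & continuous d].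
Proof.
move=> hM; have entry (f : X -> R) (i j : 'I_2) :
    (forall x, mat2 (a x) (b x) (c x) (d x) i j = f x) -> continuous f.
  move=> /funext <- x.
  exact: (@continuous_comp _ _ _ _ (fun M : 'M[R]_2 => M i j) x (hM x)
    (@coord_continuous _ 2 2 i j _)).
by split; [apply: (entry _ 0 0) | apply: (entry _ 0 1) | apply: (entry _ 1 0)
  | apply: (entry _ 1 1)] => x; rewrite mat2E.
Qed.

Lemma vnorm_cv2 (a b : R) : vnorm (cv2 a b) = Num.sqrt (a ^+ 2 + b ^+ 2).
Proof. by rewrite /vnorm sum_ord2 !mxE. Qed.

Lemma vnorm_e2 (x : R) : vnorm (cv2 0 x) = `|x|.
Proof. by rewrite vnorm_cv2 expr0n /= add0r sqrtr_sqr. Qed.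

Lemma vnorm_gt0 (u : 'cV[R]_2) : u != 0 -> 0 < vnorm u.
Proof.
move=> u0; rewrite [u]cv2_eta vnorm_cv2 sqrtr_gt0 lt_neqAle addr_ge0 ?sqr_ge0 //.
rewrite andbT eq_sym; apply: contra u0 => /eqP u2.
have u_0 : u ord0 ord0 = 0 by apply/eqP; rewrite -sqrf_eq0; apply/eqP; nra.
have u_1 : u 1 ord0 = 0 by apply/eqP; rewrite -sqrf_eq0; apply/eqP; nra.
by apply/eqP/matrixP => i j; rewrite [u]cv2_eta u_0 u_1 !mxE; case: ifP.
Qed.

Lemma vnorm_diag_ge (a d m : R) (u : 'cV[R]_2) :
  0 <= m -> m <= `|a| -> m <= `|d| -> m * vnorm u <= vnorm (mat2 a 0 0 d *m u).
Proof.
move=> m0 ma md; rewrite [u]cv2_eta mul_mat2_cv2 !vnorm_cv2 -{1}(ger0_norm m0).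
rewrite -sqrtr_sqr -sqrtrM ?sqr_ge0 // ler_sqrt ?addr_ge0 ?sqr_ge0 //.
have sqr_le (y : R) : m <= `|y| -> m ^+ 2 <= y ^+ 2.
  by move=> my; rewrite -[y ^+ 2]real_normK ?num_real // lerXn2r ?nnegrE // (le_trans m0 my).
rewrite !mul0r addr0 add0r !exprMn mulrDr.
by rewrite lerD // ler_wpM2r ?sqr_ge0 // sqr_le.
Qed.

Lemma line_neq0 (P : 'M[R]_2) : is_line P -> exists2 u : 'cV[R]_2, P *m u = u & u != 0.
Proof.
move=> [_ [PP rk]].
have P0 : P != 0 by apply/eqP => P0; move: rk; rewrite P0 mxrank0.
have [j Hj] : exists j : 'I_2, col j P != 0.
  apply/existsP; apply: contraR P0 => /existsPn h; apply/eqP/matrixP => i j.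
  by have := h j; rewrite negbK => /eqP /matrixP /(_ i ord0); rewrite !mxE.
by exists (col j P) => //; rewrite colE mulmxA PP.
Qed.

Lemma invmx_lower_e2 (a c d x : R) : a != 0 -> d != 0 ->
  invmx (mat2 a 0 c d) *m cv2 0 x = cv2 0 (x / d).
Proof.
move=> a0 d0.
have U : mat2 a 0 c d \in unitmx by rewrite unitmxE det_mat2 unitfE mul0r subr0 mulf_neq0.
suff -> : cv2 0 x = mat2 a 0 c d *m cv2 0 (x / d) by rewrite mulKmx.
by rewrite mul_mat2_cv2 !mulr0 !mul0r addr0 add0r mulrCA divff ?mulr1.
Qed.

Lemma entry_le_mx_norm m n (M : 'M[R]_(m, n)) i j : `|M i j| <= `|M|.
Proof. by rewrite [`|M|]mx_normrE; apply: (le_bigmax _ _ (i, j)). Qed.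

Lemma mx_norm_le m n (M : 'M[R]_(m, n)) C :
  0 <= C -> (forall i j, `|M i j| <= C) -> `|M| <= C.
Proof. by move=> C0 h; rewrite [`|M|]mx_normrE; apply: bigmax_le => // -[i j] _. Qed.

End TwoByTwo.

Section CocycleAlongOrbit.
Context {R : realType} {X : Type} (T : X -> X).

Lemma cocycle_det_neq0 (B : X -> 'M[R]_2) n x :
  (forall y, \det (B y) != 0) -> \det (cocycle T B n x) != 0.
Proof.
move=> h; elim: n => [|n IH] /=; first by rewrite det1 oner_eq0.
by rewrite det_mulmx mulf_neq0.
Qed.

Lemma iter_cancel (Tinv : X -> X) n : cancel T Tinv -> cancel (iter n T) (iter n Tinv).
Proof. by move=> TK; elim: n => // n IH y; rewrite iterSr iterS TK IH. Qed.

Variables (lam sig eta : X -> R).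
Let B y := mat2 (lam y) 0 (sig y) (eta y).

Lemma cocycle_diag n y : (forall i, (i < n)%N -> sig (iter i T y) = 0) ->
  cocycle T B n y =
  mat2 (\prod_(i < n) lam (iter i T y)) 0 0 (\prod_(i < n) eta (iter i T y)).
Proof.
elim: n => [_|n IH h].
  rewrite !big_ord0 /=; apply/matrixP => i j; rewrite !mxE.
  by case: i => [[|[|//]] Hi]; case: j => [[|[|//]] Hj].
rewrite /= IH => [|i Hi]; last exact/h/ltnW.
rewrite /B h // mul_mat2 !big_ord_recr /= !mulr0 !mul0r !addr0 add0r.
by rewrite [lam _ * _]mulrC [eta _ * _]mulrC.
Qed.

Lemma cocycle_inv_e2 (Tinv : X -> X) n y : cancel T Tinv ->
  (forall z, lam z != 0) -> (forall z, eta z != 0) ->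
  cocycle_inv Tinv B n (iter n T y) *m cv2 0 1 =
  cv2 0 (\prod_(i < n) eta (iter i T y))^-1.
Proof.
move=> TK lam0 eta0; elim: n y => [|n IH] y; first by rewrite /= mul1mx big_ord0 invr1.
rewrite /= -mulmxA -!iterS iter_cancel // iterSr IH invmx_lower_e2 //.
rewrite big_ord_recl /= invfM mulrC; congr (cv2 0 (_ * _)).
by congr (_^-1); apply: eq_bigr => i _; rewrite -iterSr.
Qed.

End CocycleAlongOrbit.

Lemma dominated_diag_window {R : realType} (X : topologicalType) (T Tinv : X -> X)
    (lam sig eta : X -> R) (E : X -> 'M[R]_2) :
  cancel T Tinv -> (forall z, 0 < lam z) -> (forall z, 0 < eta z) ->
  dominated_splitting T Tinv (fun x => mat2 (lam x) 0 (sig x) (eta x)) E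
    (fun _ => e2line) ->
  exists2 l : nat, (0 < l)%N & forall y,
    (forall i, (i < l)%N -> sig (iter i T y) = 0) ->
    \prod_(i < l) lam (iter i T y) * 2 < \prod_(i < l) eta (iter i T y).
Proof.
move=> TK lam_gt0 eta_gt0 [lines _ _ _ [l l_gt0 dom]]; exists l => // y y_diag.
have [u Eu u_neq0] := line_neq0 (proj1 (lines y)).
have e2_fixed : e2line *m cv2 0 1 = cv2 0 1 :> 'cV[R]_2.
  by rewrite /e2line mul_mat2_cv2 !mul0r !add0r mulr1.
have e2_neq0 : cv2 0 1 != 0 :> 'cV[R]_2.
  by apply/eqP => /matrixP /(_ 1 ord0); rewrite !mxE /= => /eqP; rewrite oner_eq0.
have lam_neq0 z : lam z != 0 by rewrite gt_eqF.
have eta_neq0 z : eta z != 0 by rewrite gt_eqF.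
have := dom y u _ Eu u_neq0 e2_fixed e2_neq0.
rewrite cocycle_inv_e2 // cocycle_diag //.
set L := \prod_(i < l) lam _; set P := \prod_(i < l) eta _.
have P_gt0 : 0 < P by apply: prodr_gt0.
rewrite !vnorm_e2 normr1 divr1 gtr0_norm ?invr_gt0 // => dom_y.
(* If [P <= 2 L], the cocycle stretches [u] by at least [P / 2] while it shrinks [e2]
   by exactly [1 / P], so the domination ratio is at least [1 / 2]. *)
rewrite ltNge; apply/negP => PL; move: dom_y; apply/negP; rewrite -leNgt.
have stretch : P / 2 * vnorm u <= vnorm (mat2 L 0 0 P *m u).
  apply: vnorm_diag_ge.
  - by rewrite divr_ge0 // ltW.
  - by rewrite gtr0_norm ?prodr_gt0 // ler_pdivrMr.
  - by rewrite gtr0_norm // ler_pdivrMr //; lra.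
have u_gt0 := vnorm_gt0 u_neq0.
rewrite -(ler_pdivlMr _ _ u_gt0) in stretch.
by rewrite ler_pdivlMr // mulrC.
Qed.

Section AdaptedWeight.
Context {R : realType}.

(* An adapted (Lyapunov) weight: it turns a contraction of the ratios [r] by [g ^+ l]
   over every window of [l] steps into a contraction by [g] at every single step. *)
Definition adapted_weight (g : R) (l : nat) (r : nat -> R) (n : nat) : R :=
  \sum_(j < l) g ^- j * \prod_(i < j) r (n + i)%N.

Variables (g : R) (l : nat) (r : nat -> R).
Hypotheses (g_gt0 : 0 < g) (l_gt0 : (0 < l)%N) (r_ge0 : forall n, 0 <= r n).

Lemma adapted_weight_ge1 n : 1 <= adapted_weight g l r n.
Proof.
case: l l_gt0 => // l' _; rewrite /adapted_weight big_ord_recl big_ord0 expr0 invr1 mul1r.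
rewrite lerDl; apply: sumr_ge0 => j _.
by rewrite mulr_ge0 ?prodr_ge0 // invr_ge0 exprn_ge0 // ltW.
Qed.

Lemma adapted_weight_le (M : R) n : (forall m, r m <= M) ->
  adapted_weight g l r n <= adapted_weight g l (fun=> M) 0.
Proof.
move=> r_le; apply: ler_sum => j _; apply: ler_wpM2l.
  by rewrite invr_ge0 exprn_ge0 // ltW.
by apply: ler_prod => i _; rewrite r_ge0 r_le.
Qed.

Lemma adapted_weight_step n : \prod_(i < l) r (n + i)%N <= g ^+ l ->
  r n * adapted_weight g l r n.+1 <= g * adapted_weight g l r n.
Proof.
case: l l_gt0 => // l' _ window.
pose a j := g ^- j * \prod_(i < j.+1) r (n + i)%N.
have shiftE : r n * adapted_weight g l'.+1 r n.+1 = \sum_(j < l'.+1) a j.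
  rewrite /adapted_weight mulr_sumr; apply: eq_bigr => j _.
  rewrite /a big_ord_recl addn0 mulrCA; congr (_ * (_ * _)).
  by apply: eq_bigr => i _; rewrite addSnnS.
have scaleE : g * adapted_weight g l'.+1 r n = g + \sum_(j < l') a j.
  rewrite /adapted_weight big_ord_recl big_ord0 expr0 invr1 mulr1 mulrDr mulr1.
  congr (_ + _); rewrite mulr_sumr; apply: eq_bigr => j _.
  by rewrite /a /= mulrA exprS invfM mulrA divff ?gt_eqF // mul1r /bump leq0n add1n.
rewrite shiftE scaleE big_ord_recr /= addrC lerD2r /a.
rewrite -(ler_pM2l (exprn_gt0 l' g_gt0)) mulrA divff ?expf_neq0 ?gt_eqF // mul1r.
by rewrite -exprSr.
Qed.

End AdaptedWeight.

Lemma rotated_cone_step {R : realType} (a b w w' c s g k p q : R) :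
  0 < a -> 0 < b -> 1 <= w <= k -> a * w' <= g * (b * w) ->
  0 <= c <= 1 -> 0 <= g -> g * (1 + `|s|) <= c - `|s| * k ->
  s * p <= 0 -> w * `|p| <= k * q ->
  let p' := a * (c * p - s * q) in let q' := b * (s * p + c * q) in
  [/\ s * p' <= 0, w' * `|p'| <= k * q' & q' <= b * q].
Proof.
move=> a_gt0 b_gt0 /andP[w_ge1 w_le] step /andP[c_ge0 c_le1] g_ge0 cone sp wp p' q'.
have k_gt0 : 0 < k by apply: lt_le_trans w_le; apply: lt_le_trans w_ge1.
have w_ge0 : 0 <= w := le_trans ler01 w_ge1.
have q_ge0 : 0 <= q.
  by rewrite -(pmulr_rge0 _ k_gt0); apply: le_trans wp; apply: mulr_ge0.
have p_le : `|p| <= k * q by apply: le_trans wp; rewrite ler_peMl.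
have sp_ge : - (`|s| * (k * q)) <= s * p.
  have : `|s * p| <= `|s| * (k * q) by rewrite normrM ler_wpM2l.
  by rewrite ler_norml => /andP[].
have q'_ge : b * ((c - `|s| * k) * q) <= q'.
  by rewrite /q' ler_pM2l //; lra.
split.
- rewrite /p' mulrCA pmulr_rle0 //.
  have := mulr_ge0_le0 c_ge0 sp; have := mulr_ge0 (sqr_ge0 s) q_ge0; lra.
- have X_le : `|c * p - s * q| <= c * `|p| + `|s| * q.
    by apply: le_trans (ler_normB _ _) _; rewrite !normrM (ger0_norm c_ge0) (ger0_norm q_ge0).
  have wX_le : w * (c * `|p| + `|s| * q) <= (1 + `|s|) * (k * q).
    have : w * (c * `|p|) <= k * q.
      by apply: le_trans wp; rewrite mulrCA ler_piMl // mulr_ge0.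
    have : w * (`|s| * q) <= `|s| * (k * q) by rewrite mulrCA ler_wpM2l // ler_wpM2r.
    lra.
  have bw_ge0 : 0 <= g * (b * w) by rewrite !mulr_ge0 // ltW.
  have h1 := ler_wpM2r (normr_ge0 (c * p - s * q)) step.
  have h2 := ler_wpM2l bw_ge0 X_le.
  have h3 := ler_wpM2l (mulr_ge0 g_ge0 (ltW b_gt0)) wX_le.
  have h4 := ler_wpM2l (mulr_ge0 (mulr_ge0 (ltW b_gt0) (ltW k_gt0)) q_ge0) cone.
  have h5 := ler_wpM2l (ltW k_gt0) q'_ge.
  rewrite /p' normrM (gtr0_norm a_gt0).
  lra.
- rewrite /q' ler_pM2l //; have := ler_wpM2r q_ge0 c_le1; lra.
Qed.

Section RotatedOrbit.
Context {R : realType} {X : Type} (T : X -> X) (lam sig eta : X -> R) (th : R) (x : X).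
Hypotheses (lam_gt0 : forall z, 0 < lam z) (eta_gt0 : forall z, 0 < eta z).
Hypothesis orbit_diag : forall n, sig (iter n T x) = 0.
Variables (g k : R) (w : nat -> R).
Hypotheses (w_bounds : forall n, 1 <= w n <= k)
  (w_step : forall n, lam (iter n T x) * w n.+1 <= g * (eta (iter n T x) * w n))
  (cos_ge0 : 0 <= cos th) (g_ge0 : 0 <= g)
  (cone_cond : g * (1 + `|sin th|) <= cos th - `|sin th| * k).

Let H y := mat2 (lam y) 0 (sig y) (eta y) *m rotation th.
Let orbit v0 n : 'cV[R]_2 := cocycle T H n x *m v0.

Lemma rotated_orbit_step (v0 : 'cV[R]_2) n :
  orbit v0 n.+1 ord0 ord0 =
    lam (iter n T x) * (cos th * orbit v0 n ord0 ord0 - sin th * orbit v0 n 1 ord0) /\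
  orbit v0 n.+1 1 ord0 =
    eta (iter n T x) * (sin th * orbit v0 n ord0 ord0 + cos th * orbit v0 n 1 ord0).
Proof.
rewrite /orbit /= -mulmxA [cocycle _ _ _ _ *m _]cv2_eta /H orbit_diag.
by rewrite /rotation mul_mat2 mul_mat2_cv2 !cv2_0 !cv2_1; split; ring.
Qed.

Lemma rotated_orbit_cone (v0 : 'cV[R]_2) :
  sin th * v0 ord0 ord0 <= 0 -> w 0 * `|v0 ord0 ord0| <= k * v0 1 ord0 ->
  forall n, [/\ sin th * orbit v0 n ord0 ord0 <= 0,
    w n * `|orbit v0 n ord0 ord0| <= k * orbit v0 n 1 ord0 &
    orbit v0 n 1 ord0 <= v0 1 ord0 * \prod_(i < n) eta (iter i T x)].
Proof.
move=> sp0 wp0; elim=> [|n [sp wp q_le]].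
  by rewrite /orbit /= mul1mx big_ord0 mulr1.
have [-> ->] := rotated_orbit_step v0 n.
have [|sp' wp' q'_le] := rotated_cone_step (lam_gt0 _) (eta_gt0 _) (w_bounds n)
  (w_step n) _ g_ge0 cone_cond sp wp; first by rewrite cos_ge0 cos_le1.
split => //; apply: le_trans q'_le _.
by rewrite big_ord_recr /= mulrA [X in _ <= X]mulrC ler_wpM2l ?(ltW (eta_gt0 _)).
Qed.

Lemma rotated_orbit_entry_le (v0 : 'cV[R]_2) :
  v0 1 ord0 = 1 -> sin th * v0 ord0 ord0 <= 0 -> w 0 * `|v0 ord0 ord0| <= k ->
  forall n i, `|orbit v0 n i ord0| <= k * \prod_(i < n) eta (iter i T x).
Proof.
move=> v0_1 sp0 wp0 n i.
have [|_ wp q_le] := rotated_orbit_cone sp0 _ n; first by rewrite v0_1 mulr1.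
rewrite v0_1 mul1r in q_le.
have /andP[w_ge1 w_le] := w_bounds n.
have k_ge1 : 1 <= k := le_trans w_ge1 w_le.
have q_ge0 : 0 <= orbit v0 n 1 ord0.
  rewrite -(pmulr_rge0 _ (lt_le_trans ltr01 k_ge1)); apply: le_trans wp.
  by rewrite mulr_ge0 // (le_trans ler01).
have p_le : `|orbit v0 n ord0 ord0| <= k * orbit v0 n 1 ord0.
  by apply: le_trans wp; rewrite ler_peMl.
have prod_ge0 : 0 <= \prod_(i < n) eta (iter i T x) by apply: prodr_ge0 => j _; apply: ltW.
case: i => [[|[|//]] i_lt].
- rewrite (_ : Ordinal i_lt = ord0); last exact: val_inj.
  by apply: le_trans p_le _; rewrite ler_wpM2l // (le_trans ler01).
- rewrite (_ : Ordinal i_lt = 1); last exact: val_inj.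
  by rewrite ger0_norm //; apply: le_trans q_le _; rewrite ler_peMl.
Qed.

Lemma rotated_cocycle_norm_le n :
  `|cocycle T H n x| <= 2 * k * \prod_(i < n) eta (iter i T x).
Proof.
(* Bound the images of [e2] and of [(-t, 1)], where the sign [t] is chosen so that
   [(-t, 1)] lies in the invariant cone; the first column is their scaled difference. *)
pose t : R := if 0 <= sin th then 1 else -1.
have t2 : t * t = 1 by rewrite /t; case: ifP => _; rewrite ?mulrNN mulr1.
have t_norm : `|t| = 1 by rewrite /t; case: ifP => _; rewrite ?normrN normr1.
have st : sin th * - t <= 0.
  rewrite /t; case: ifP => h; first by rewrite mulrN1 oppr_le0.
  by rewrite opprK mulr1 ltW // ltNge h.
have /andP[w0_ge1 w0_le] := w_bounds 0.
have k_ge0 : 0 <= k := le_trans ler01 (le_trans w0_ge1 w0_le).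
have col1 := rotated_orbit_entry_le (cv2_1 0 1) _ _ n.
rewrite cv2_0 mulr0 normr0 mulr0 in col1; have {}col1 := col1 (lexx 0) k_ge0.
have col0 := rotated_orbit_entry_le (cv2_1 (- t) 1) _ _ n.
rewrite cv2_0 normrN t_norm mulr1 in col0; have {}col0 := col0 st w0_le.
have prod_ge0 : 0 <= \prod_(i < n) eta (iter i T x) by apply: prodr_ge0 => j _; apply: ltW.
apply: mx_norm_le => [|i j]; first by rewrite !mulr_ge0.
have := col1 i; have := col0 i; rewrite /orbit !mxE !sum_ord2 !mxE /=.
set a := cocycle T H n x i 0; set b := cocycle T H n x i 1.
rewrite mulr0 add0r !mulr1 => c0 c1.
have := mulr_ge0 k_ge0 prod_ge0.
case: j => [[|[|//]] j_lt] kP_ge0.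
- rewrite (_ : Ordinal j_lt = 0) -/a; last exact: val_inj.
  have -> : a = t * (b - (a * - t + b)).
    by rewrite mulrN opprD opprK addrCA subrr addr0 mulrCA t2 mulr1.
  rewrite normrM t_norm mul1r; apply: le_trans (ler_normB _ _) _; lra.
- by rewrite (_ : Ordinal j_lt = 1) -/b; [lra | exact: val_inj].
Qed.

End RotatedOrbit.

Section RealAnalysis.
Context {R : realType}.

Lemma bernoulli_ineq (a : R) n : 0 <= a <= 1 -> 1 - n%:R * a <= (1 - a) ^+ n.
Proof.
move=> /andP[a0 a1]; elim: n => [|n IH]; first by rewrite mul0r subr0 expr0.
rewrite exprS; apply: le_trans (ler_wpM2l _ IH); last by rewrite subr_ge0.
have := mulr_ge0 (ler0n R n) (sqr_ge0 a); rewrite -natr1 expr2; nra.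
Qed.

Lemma sin_cos_near0 (e : R) : 0 < e -> exists2 d : R, 0 < d &
  forall t, `|t| < d -> `|sin t| < e /\ 1 - e < cos t.
Proof.
move=> e_gt0.
have sin_near : \forall t \near (0 : R), `|sin 0 - sin t| < e.
  exact: (@cvgr_dist_lt _ _ _ _ _ sin (sin 0) (@continuous_sin R 0) e e_gt0).
have cos_near : \forall t \near (0 : R), `|cos 0 - cos t| < e.
  exact: (@cvgr_dist_lt _ _ _ _ _ cos (cos 0) (@continuous_cos R 0) e e_gt0).
have [d /= d_gt0 near] := (iffLR (nbhs_ballP _ _)) (filterI sin_near cos_near).
exists d => // t t_lt.
have : ball (0 : R) d t by rewrite -ball_normE /ball_ /= sub0r normrN.
move=> /near [/= s_lt c_lt]; rewrite sin0 sub0r normrN in s_lt.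
by rewrite cos0 in c_lt; split => //; move: c_lt; rewrite ltr_norml => /andP[_]; lra.
Qed.

Lemma cone_condition_near0 (g k : R) : 0 < g < 1 -> 0 <= k ->
  exists2 d : R, 0 < d & forall t, `|t| < d ->
    0 <= cos t /\ g * (1 + `|sin t|) <= cos t - `|sin t| * k.
Proof.
move=> /andP[g_gt0 g_lt1] k_ge0.
(* [e (2 + k) = 1 - g] makes [g + e = 1 - e (1 + k)], which separates the two sides
   once [|sin t| < e] and [1 - e < cos t]. *)
pose e := (1 - g) / (2 + k).
have e_gt0 : 0 < e by rewrite divr_gt0 ?subr_gt0 // ltr_wpDr.
have eE : e * (2 + k) = 1 - g by rewrite mulfVK // gt_eqF // ltr_wpDr.
have [d d_gt0 near] := sin_cos_near0 e_gt0; exists d => // t /near[s_lt c_gt].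
have ek_ge0 := mulr_ge0 (ltW e_gt0) k_ge0.
have gs_le : g * `|sin t| <= e by apply: le_trans (ltW s_lt); rewrite ler_piMl // ltW.
have sk_le : `|sin t| * k <= e * k by rewrite ler_wpM2r // ltW.
split; lra.
Qed.

Lemma ler_cvg_to_offset (a b : nat -> R) (C la lb : R) :
  a @ \oo --> la -> b @ \oo --> lb ->
  (forall n, a n <= b n + n%:R^-1 * C) -> la <= lb.
Proof.
move=> a_cvg b_cvg a_le.
have : (fun n => b n + n%:R^-1 * C) @ \oo --> lb + 0 * C.
  by apply: cvgD => //; apply: cvgMl; rewrite -cvg_shiftS; exact: cvg_harmonic.
rewrite mul0r addr0 => c_cvg; apply: (ler_cvg_to a_cvg c_cvg); exact: nearW.
Qed.

Lemma continuous_bounded_compact (X : ptopologicalType) (f : X -> R) :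
  compact [set: X] -> continuous f -> exists M, forall x, f x <= M.
Proof.
move=> X_compact f_cont.
have [c _ c_max] := compact_EVT_max (ex_intro _ point I) X_compact
  (continuous_subspaceT f_cont).
by exists (f c) => x; apply: c_max; rewrite in_setT.
Qed.

End RealAnalysis.

Lemma continuous_iter (X : topologicalType) (T : X -> X) n :
  continuous T -> continuous (iter n T).
Proof.
move=> T_cont; elim: n => [|n IH] x /=; first exact: cvg_id.
exact: continuous_comp (IH x) (T_cont _).
Qed.

Section BorelProbability.
Context {R : realType} (X : ptopologicalType).
Variable mu : probability (g_sigma_algebraType (@open X)) R.

Lemma ae_exists (P : X -> Prop) : {ae mu, forall x, P x} -> exists x, P x.
Proof.
move=> P_ae.
have mu_gt0 : (0 < mu [set: g_sigma_algebraType (@open X)])%E.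
  by rewrite probability_setT lte01.
exact: @filter_ex _ _ (ae_properfilter_algebraOfSetsType mu_gt0) _ P_ae.
Qed.

Lemma ae_iter_eq0 (T : X -> X) (f : X -> R) :
  continuous T -> continuous f ->
  (forall A : set (g_sigma_algebraType (@open X)),
      measurable A -> mu (T @^-1` A) = mu A) ->
  {ae mu, forall x, f x = 0} -> {ae mu, forall x, forall n, f (iter n T x) = 0}.
Proof.
move=> T_cont f_cont T_inv f_ae.
pose Z n : set (g_sigma_algebraType (@open X)) := iter n T @^-1` (f @^-1` [set r | r != 0]).
have Z_meas n : measurable (Z n).
  apply: sub_gen_smallest; rewrite /Z -comp_preimage; apply: open_comp; last exact: open_neq.
  by move=> x _; apply: continuous_comp; [exact: continuous_iter | exact: f_cont].
have Z_null n : mu (Z n) = 0%E.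
  elim: n => [|n IH].
    by apply: (measure_negligible (Z_meas 0%N)); apply: negligibleS f_ae => x /= /eqP.
  rewrite -IH -(T_inv (Z n)) //; congr (mu _).
  by rewrite /Z; apply/seteqP; split => x /=; rewrite -iterS iterSr.
have : mu.-negligible (\bigcup_n Z n).
  by apply: negligible_bigcup => n; exists (Z n); split; [exact: Z_meas | exact: Z_null |].
by apply: negligibleS => x /= /existsNP [n /eqP f_neq0]; exists n.
Qed.

End BorelProbability.

Section UniformRotatedBound.
Context {R : realType} {X : Type} (T : X -> X) (lam sig eta : X -> R) (l : nat) (M : R).
Hypotheses (lam_gt0 : forall z, 0 < lam z) (eta_gt0 : forall z, 0 < eta z).
Hypotheses (l_gt0 : (0 < l)%N) (M_ge0 : 0 <= M) (ratio_le : forall z, lam z / eta z <= M).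
Hypothesis window_dom : forall y, (forall i, (i < l)%N -> sig (iter i T y) = 0) ->
  \prod_(i < l) lam (iter i T y) * 2 < \prod_(i < l) eta (iter i T y).

Let g : R := 1 - (l.*2)%:R^-1.
Let k : R := adapted_weight g l (fun=> M) 0.

Lemma contraction_rate : 0 < g < 1 /\ 2^-1 <= g ^+ l.
Proof.
have l2_gt1 : 1 < (l.*2)%:R :> R by rewrite ltr1n -addnn (leq_add l_gt0 l_gt0).
have l2_gt0 : 0 < (l.*2)%:R :> R := lt_trans ltr01 l2_gt1.
split; first by rewrite subr_gt0 invf_lt1 // l2_gt1 gtrBl invr_gt0 l2_gt0.
have -> : 2^-1 = 1 - l%:R * (l.*2)%:R^-1 :> R.
  rewrite -muln2 natrM invfM mulrA divff ?mul1r; last by rewrite pnatr_eq0 -lt0n.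
  by field.
by apply: bernoulli_ineq; rewrite invr_ge0 ltW //= invf_le1 // ltW.
Qed.

Lemma orbit_window_ratio_le x : (forall n, sig (iter n T x) = 0) -> forall m,
  \prod_(i < l) (lam (iter (m + i) T x) / eta (iter (m + i) T x)) <= g ^+ l.
Proof.
move=> x_diag m; set y := iter m T x.
have y_diag i : (i < l)%N -> sig (iter i T y) = 0 by rewrite /y -iterD.
have -> : \prod_(i < l) (lam (iter (m + i) T x) / eta (iter (m + i) T x)) =
    \prod_(i < l) lam (iter i T y) / \prod_(i < l) eta (iter i T y).
  by rewrite big_split /= -prodfV; congr (_ * _); apply: eq_bigr => i _;
    rewrite addnC iterD.
have P_gt0 : 0 < \prod_(i < l) eta (iter i T y) by apply: prodr_gt0.
apply: le_trans (proj2 contraction_rate); rewrite ler_pdivrMr //.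
by have := window_dom y_diag; lra.
Qed.

Lemma rotated_cocycle_uniform_bound : exists2 d : R, 0 < d &
  forall th, `|th| < d -> forall x, (forall n, sig (iter n T x) = 0) -> forall n,
  `|cocycle T (fun y => mat2 (lam y) 0 (sig y) (eta y) *m rotation th) n x| <=
    2 * k * \prod_(i < n) eta (iter i T x).
Proof.
have [g_bounds _] := contraction_rate; have /andP[g_gt0 _] := g_bounds.
have k_ge0 : 0 <= k by apply: le_trans (adapted_weight_ge1 _ _ _ _).
have [d d_gt0 near] := cone_condition_near0 g_bounds k_ge0.
exists d => // th th_lt x x_diag n.
have [cos_ge0 cone] := near th th_lt.
pose r m := lam (iter m T x) / eta (iter m T x).
have r_ge0 m : 0 <= r m by rewrite divr_ge0 ?ltW.
apply: (rotated_cocycle_norm_le lam_gt0 eta_gt0 x_diag (g := g) (k := k)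
  (w := adapted_weight g l r)) => //; last exact: ltW.
  move=> m; rewrite (adapted_weight_ge1 g_gt0 l_gt0 r_ge0) /=.
  by apply: (adapted_weight_le l g_gt0 r_ge0 m) => j; exact: ratio_le.
move=> m; have lamE : lam (iter m T x) = eta (iter m T x) * r m.
  by rewrite /r mulrC divfK ?gt_eqF.
rewrite lamE -mulrA [X in _ <= X]mulrCA ler_wpM2l ?(ltW (eta_gt0 _)) //.
by apply: (adapted_weight_step g_gt0 l_gt0); rewrite /r; exact: orbit_window_ratio_le.
Qed.

Lemma rotated_exponent_le : exists2 d : R, 0 < d & exists C, forall th, `|th| < d ->
  forall x, (forall n, sig (iter n T x) = 0) -> forall n : nat,
  n%:R^-1 * ln `|cocycle T (fun y => mat2 (lam y) 0 (sig y) (eta y) *m rotation th) n x|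
  <= n%:R^-1 * ln `|cocycle T (fun y => mat2 (lam y) 0 (sig y) (eta y) *m rotation 0) n x|
     + n%:R^-1 * C.
Proof.
have [d d_gt0 bound] := rotated_cocycle_uniform_bound.
have [/andP[g_gt0 _] _] := contraction_rate.
have k_gt0 : 0 < k by apply: lt_le_trans (adapted_weight_ge1 _ _ _ _).
exists d => //; exists (ln (2 * k)) => th th_lt x x_diag n.
rewrite -mulrDr ler_wpM2l ?invr_ge0 //.
set P := \prod_(i < n) eta (iter i T x).
have P_gt0 : 0 < P by apply: prodr_gt0.
have P_le : P <= `|cocycle T (fun y => mat2 (lam y) 0 (sig y) (eta y) *m rotation 0) n x|.
  under eq_fun do rewrite rotation0 mulmx1.
  rewrite cocycle_diag => [|i _]; last exact: x_diag.
  by apply: le_trans (entry_le_mx_norm _ 1 1); rewrite mat2E /= gtr0_norm.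
have rotated_gt0 :
    0 < `|cocycle T (fun y => mat2 (lam y) 0 (sig y) (eta y) *m rotation th) n x|.
  have : \det (cocycle T (fun y => mat2 (lam y) 0 (sig y) (eta y) *m rotation th) n x) != 0.
    apply: cocycle_det_neq0 => y.
    by rewrite det_mulmx det_rotation mulr1 det_mat2 mul0r subr0 mulf_neq0 ?gt_eqF.
  by rewrite normr_gt0; apply: contraNneq => ->; rewrite det0.
apply: (@le_trans _ _ (ln (2 * k * P))).
  by rewrite ler_ln ?posrE ?mulr_gt0 //; exact: bound.
by rewrite lnM ?posrE ?mulr_gt0 // addrC lerD2r ler_ln ?posrE // (lt_le_trans P_gt0).
Qed.

End UniformRotatedBound.

Theorem lemma3p8 (R : realType) (X : pseudoPMetricType R)
  (mu : probability (g_sigma_algebraType (@open X)) R)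
  (T Tinv : X -> X) (lam sig eta : X -> R) :
  hausdorff_space X -> compact [set: X] ->
  continuous T -> continuous Tinv -> cancel T Tinv -> cancel Tinv T ->
  (forall A : set (g_sigma_algebraType (@open X)),
      measurable A -> mu (T @^-1` A) = mu A) ->
  (forall A : set (g_sigma_algebraType (@open X)),
      measurable A -> T @^-1` A = A -> mu A = 0%E \/ mu A = 1%E) ->
  continuous (fun x => mat2 (lam x) 0 (sig x) (eta x)) ->
  (forall x, 0 < \det (mat2 (lam x) 0 (sig x) (eta x))) ->
  (forall x, 0 < eta x) ->
  (exists E : X -> 'M[R]_2,
      dominated_splitting T Tinv (fun x => mat2 (lam x) 0 (sig x) (eta x))
        E (fun _ => e2line)) ->
  {ae mu, forall x, sig x = 0} ->
  forall L : R -> R,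
    (forall theta : R,
       {ae mu, forall x,
          (fun n : nat => n%:R^-1 *
             ln `|cocycle T (fun y => mat2 (lam y) 0 (sig y) (eta y) *m rotation theta) n x|)
          @ \oo --> L theta}) ->
    exists2 delta : R, 0 < delta &
      forall theta : R, `|theta| < delta -> L theta <= L 0.
Proof.
move=> _ X_compact T_cont _ TK _ T_inv _ H_cont H_det eta_gt0 [E dom] sig_ae L L_cvg.
have [lam_cont _ sig_cont eta_cont] := mat2_continuous_entries H_cont.
have lam_gt0 z : 0 < lam z by have := H_det z; rewrite det_mat2 mul0r subr0 pmulr_lgt0.
have [l l_gt0 window] := dominated_diag_window TK lam_gt0 eta_gt0 dom.
have ratio_cont : continuous (fun z => lam z / eta z).
  move=> z; change {for z, continuous (lam \* (fun y => (eta y)^-1))}.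
  apply: continuousM; first exact: lam_cont.
  by apply: continuousV; [rewrite gt_eqF | exact: eta_cont].
have [M ratio_le] := continuous_bounded_compact X_compact ratio_cont.
have M_ge0 : 0 <= M.
  exact: le_trans (ltW (divr_gt0 (lam_gt0 point) (eta_gt0 point))) (ratio_le point).
have [d d_gt0 [C exponent_le]] :=
  rotated_exponent_le lam_gt0 eta_gt0 l_gt0 M_ge0 ratio_le window.
exists d => // th th_lt.
have diag_ae := ae_iter_eq0 T_cont sig_cont T_inv sig_ae.
have ae_filter := ae_filter_ringOfSetsType mu.
have [x [x_diag [cvg_th cvg_0]]] := ae_exists (@filterI _ _ ae_filter _ _ diag_ae
  (@filterI _ _ ae_filter _ _ (L_cvg th) (L_cvg 0))).
exact: ler_cvg_to_offset cvg_th cvg_0 (exponent_le th th_lt x x_diag).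
Qed.
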